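(* Let $V$, $P$ and $\hat v_h^N$ be as in the context, fix an integer $N\ge0$, and let $g_h^N(x)=H_p((\hat v_h^N)'(x),x)=P+(\hat v_h^N)'(x)$. Then (for all sufficiently small $h>0$) there exists a periodic nonnegative probability density $\sigma_h^N$ on $\mathbb{T}$ solving $$(g_h^N(x)\,\sigma_h^N(x))'+h\,(\sigma_h^N)''(x)=0,$$ and there exist constants $k,K>0$, independent of $h$, such that $k\le\sigma_h^N(x)\le K$ for all $x\in\mathbb{T}$.
   Context: $\mathbb{T}=\mathbb{R}/\mathbb{Z}\cong[-\tfrac12,\tfrac12)$, $H(p,x)=\tfrac12(P+p)^2+V(x)$. $V:\mathbb{T}\to\mathbb{R}$ is smooth, symmetric, with a unique non-degenerate minimum at $0$. $\overline H(P)$ is the effective Hamiltonian: the unique constant $c$ for which $\tfrac12(P+\phi')^2+V=c$ has a periodic viscosity solution; $P_{crit}=\inf\{P:\overline H(P)>\min\overline H\}$, and $P>P_{crit}$ is fixed, so that $\overline H(P)>\max V$. Put $p^+(x)=\sqrt{2(\overline H(P)-V(x))}>0$ and $\sigma_0=c/p^+$ with $\int_{\mathbb{T}}\sigma_0=1$. Define $\overline H_0=\overline H(P)$, $v_0(x)=\int_{-1/2}^x p^+(s)ds-P(x+\tfrac12)$, and inductively for $j\ge1$: $\overline H_j=\int_{\mathbb{T}}\big[-\tfrac12 v_{j-1}''+\tfrac12\sum_{i=1}^{j-1}v_i'v_{j-i}'\big]\sigma_0\,dx$, and $v_j$ a smooth periodic solution (unique up to additive constant) of $-\tfrac12v_{j-1}''+p^+v_j'+\tfrac12\sum_{i=1}^{j-1}v_i'v_{j-i}'=\overline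 H_j$. Set $\hat v_h^N=\sum_{j=0}^N h^jv_j$. *)

From Stdlib Require Import Reals.
From Coquelicot Require Import Coquelicot.
Open Scope R_scope.

Fixpoint sumR (f : nat -> R) (n : nat) : R :=
  match n with O => 0 | S m => sumR f m + f m end.

Definition smooth (f : R -> R) : Prop := forall (n : nat) (x : R), ex_derive_n f n x.
Definition periodic1 (f : R -> R) : Prop := forall x, f (x + 1) = f x.

Definition admissible_potential (V : R -> R) : Prop :=
  smooth V /\ periodic1 V /\ (forall x, V (- x) = V x) /\
  (forall x, V 0 <= V x) /\
  (forall x, V x = V 0 -> exists k : Z, x = IZR k) /\
  Derive_n V 2 0 > 0.

Definition C1 (psi : R -> R) : Prop :=
  (forall x, ex_derive psi x) /\ (forall x, continuous (Derive psi) x).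

Definition visc_sol (V : R -> R) (P c : R) (phi : R -> R) : Prop :=
  (forall x, continuous phi x) /\ periodic1 phi /\
  (forall psi x0, C1 psi ->
     (exists d, d > 0 /\ forall y, Rabs (y - x0) < d ->
        phi y - psi y <= phi x0 - psi x0) ->
     / 2 * (P + Derive psi x0) ^ 2 + V x0 <= c) /\
  (forall psi x0, C1 psi ->
     (exists d, d > 0 /\ forall y, Rabs (y - x0) < d ->
        phi y - psi y >= phi x0 - psi x0) ->
     / 2 * (P + Derive psi x0) ^ 2 + V x0 >= c).

Definition is_Hbar (V : R -> R) (P c : R) : Prop :=
  exists phi, visc_sol V P c phi.

Definition pplus (V : R -> R) (c : R) (x : R) : R := sqrt (2 * (c - V x)).

Definition sigma0 (V : R -> R) (c : R) (x : R) : R :=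
  / pplus V c x / RInt (fun y => / pplus V c y) (-(1/2)) (1/2).

Definition v0 (V : R -> R) (P c : R) (x : R) : R :=
  RInt (pplus V c) (-(1/2)) x - P * (x + 1/2).

Definition conv (v : nat -> R -> R) (j : nat) (x : R) : R :=
  sumR (fun k => Derive (v (S k)) x * Derive (v (j - S k)%nat) x) (j - 1).

Definition Hbar_j (V : R -> R) (c : R) (v : nat -> R -> R) (j : nat) : R :=
  RInt (fun x => (- / 2 * Derive_n (v (j - 1)%nat) 2 x + / 2 * conv v j x)
                  * sigma0 V c x) (-(1/2)) (1/2).

Definition expansion_family (V : R -> R) (P c : R) (v : nat -> R -> R) : Prop :=
  v O = v0 V P c /\
  forall j : nat, (1 <= j)%nat ->
    smooth (v j) /\ periodic1 (v j) /\
    forall x, - / 2 * Derive_n (v (j - 1)%nat) 2 x + pplus V c x * Derive (v j) x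
              + / 2 * conv v j x = Hbar_j V c v j.

Definition gN (P : R) (v : nat -> R -> R) (N : nat) (h x : R) : R :=
  P + sumR (fun j => h ^ j * Derive (v j) x) (S N).

(* For a smooth 1-periodic drift [g] with [0 < m <= g <= M] the equation
   [(g s)' + h s'' = 0] has the explicit periodic solution
   [rho x = int_{x-1}^{x} exp ((G y - G x) / h) dy], [G] a primitive of [g]:
   indeed [h rho' + g rho] is constant.  Comparing [G x - G y] with [m (x - y)]
   and [M (x - y)] gives [h / (2 M) <= rho <= h / m] once [h <= M], so the
   normalised density [rho / int rho] lies between [m / (2 M)] and [2 M / m],
   uniformly in [h].  For [g = g_h^N] one has [g = p^+ + O(h)] with
   [p^+ >= sqrt (2 (c - max V)) > 0], which provides [m] and [M] for small [h]. *)
From Stdlib Require Import Reals Lra Lia ZArith.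
From Coquelicot Require Import Coquelicot.
Open Scope R_scope.

Lemma continuous_of_ex_derive (f : R -> R) x : ex_derive f x -> continuous f x.
Proof. apply (ex_derive_continuous (K := R_AbsRing) (V := R_NormedModule)). Qed.

Lemma ex_RInt_of_continuous (f : R -> R) a b :
  (forall x, continuous f x) -> ex_RInt f a b.
Proof.
  intros fc; apply (ex_RInt_continuous (V := R_CompleteNormedModule)); auto.
Qed.

Lemma is_derive_RInt_upper (f : R -> R) a x :
  (forall x, continuous f x) -> is_derive (RInt f a) x (f x).
Proof.
  intros fc; apply is_derive_RInt with (a := a); auto.
  apply filter_forall; intros y.
  apply (RInt_correct (V := R_CompleteNormedModule)), ex_RInt_of_continuous, fc.
Qed.

Lemma RInt_Chasles_minus (f : R -> R) a b c :
  (forall x, continuous f x) -> RInt f a c - RInt f a b = RInt f b c.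
Proof.
  intros fc; rewrite <- (RInt_Chasles f a b c); try apply ex_RInt_of_continuous, fc.
  change (plus ?u ?v) with (u + v); ring.
Qed.

Lemma RInt_shift1 (f : R -> R) a b :
  (forall x, continuous f x) -> RInt (fun y => f (y + 1)) a b = RInt f (a + 1) (b + 1).
Proof.
  intros fc.
  replace (a + 1) with (1 * a + 1) by ring; replace (b + 1) with (1 * b + 1) by ring.
  rewrite <- RInt_comp_lin by apply ex_RInt_of_continuous, fc.
  apply RInt_ext; intros y _; unfold scal; simpl; unfold mult; simpl.
  rewrite !Rmult_1_l; reflexivity.
Qed.

Lemma RInt_const_bounds (f : R -> R) a b lo hi :
  (forall x, continuous f x) -> a <= b -> (forall x, lo <= f x <= hi) ->
  lo * (b - a) <= RInt f a b <= hi * (b - a).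
Proof.
  intros fc hab fb.
  assert (Hconst : forall k, RInt (fun _ => k) a b = k * (b - a)).
  { intros k; rewrite RInt_const; unfold scal; simpl; unfold mult; simpl; ring. }
  rewrite <- !Hconst; split; apply RInt_le; auto;
    solve [apply ex_RInt_const | apply ex_RInt_of_continuous, fc | intros; apply fb].
Qed.

Lemma RInt_exp_decay a x :
  0 < a -> RInt (fun y => exp (- a * (x - y))) (x - 1) x = (1 - exp (- a)) / a.
Proof.
  intros apos; apply is_RInt_unique.
  set (F := fun y => exp (- a * (x - y)) / a).
  replace ((1 - exp (- a)) / a) with (minus (F x) (F (x - 1))).
  2:{ unfold minus, plus, opp, F; simpl.
      replace (x - x) with 0 by ring; replace (x - (x - 1)) with 1 by ring.
      rewrite Rmult_0_r, Rmult_1_r, exp_0; field; lra. }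
  apply (is_RInt_derive (V := R_CompleteNormedModule) F).
  - intros y _; unfold F; auto_derive; [auto | unfold Rminus; field; lra].
  - intros y _; apply continuous_of_ex_derive; unfold F; auto_derive; auto.
Qed.

Lemma exp_neg1_lt_half : exp (- (1)) < / 2.
Proof.
  rewrite exp_Ropp; pose proof (exp_ineq1 1 ltac:(lra)).
  apply Rinv_lt_contravar; lra.
Qed.

Lemma exp_le_exp a b : a <= b -> exp a <= exp b.
Proof. intros [H | ->]; [left; apply exp_increasing; exact H | lra]. Qed.

Section Periodic.

Variable f : R -> R.
Hypothesis f_periodic : periodic1 f.

Lemma periodic1_shift_INR n x : f (x + INR n) = f x.
Proof.
  induction n as [|n IH]; [simpl; rewrite Rplus_0_r; reflexivity |].
  rewrite S_INR, <- Rplus_assoc, f_periodic; exact IH.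
Qed.

Lemma periodic1_shift_IZR k x : f (x + IZR k) = f x.
Proof.
  destruct k as [|p|p].
  - simpl; rewrite Rplus_0_r; reflexivity.
  - rewrite <- positive_nat_Z, <- INR_IZR_INZ; apply periodic1_shift_INR.
  - rewrite <- Pos2Z.opp_pos, opp_IZR, <- positive_nat_Z, <- INR_IZR_INZ.
    rewrite <- (periodic1_shift_INR (Pos.to_nat p) (x + - _)); f_equal; ring.
Qed.

Lemma periodic1_reduce x : exists y, 0 <= y <= 1 /\ f x = f y.
Proof.
  destruct (archimed x) as [H1 H2].
  exists (x - IZR (up x) + 1); split; [lra |].
  rewrite <- (periodic1_shift_IZR (up x - 1) (x - IZR (up x) + 1)), minus_IZR.
  f_equal; ring.
Qed.

Lemma periodic1_max : (forall x, continuous f x) -> exists xM, forall x, f x <= f xM.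
Proof.
  intros fc; destruct (continuity_ab_maj f 0 1) as [xM [HM _]]; [lra | |].
  { intros; apply continuity_pt_filterlim, fc. }
  exists xM; intros x; destruct (periodic1_reduce x) as [y [Hy ->]]; auto.
Qed.

Lemma periodic1_Derive : (forall x, ex_derive f x) -> periodic1 (Derive f).
Proof.
  intros fd x; symmetry.
  rewrite (Derive_ext f (fun t => f (t + 1)) x) by (intros; symmetry; apply f_periodic).
  apply is_derive_unique.
  replace (Derive f (x + 1)) with (scal 1 (Derive f (x + 1)))
    by (unfold scal; simpl; unfold mult; simpl; ring).
  apply (is_derive_comp f (fun t => t + 1)); [apply Derive_correct, fd | auto_derive; auto].
Qed.

End Periodic.

Lemma periodic1_bounded (f : R -> R) :
  periodic1 f -> (forall x, continuous f x) -> exists B, 0 <= B /\ forall x, Rabs (f x) <= B.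
Proof.
  intros fp fc.
  destruct (periodic1_max f fp fc) as [a Ha].
  destruct (periodic1_max (fun x => - f x)) as [b Hb].
  { intros x; rewrite fp; reflexivity. }
  { intros; apply (continuous_opp (K := R_AbsRing) (V := R_NormedModule) f), fc. }
  pose proof (Rabs_pos (f a)); pose proof (Rabs_pos (f b)).
  exists (Rabs (f a) + Rabs (f b)); split; [lra |].
  intros x; specialize (Ha x); specialize (Hb x); simpl in Hb.
  pose proof (Rle_abs (f a)); pose proof (Rle_abs (- f b)); rewrite Rabs_Ropp in *.
  apply Rabs_le; lra.
Qed.

Section StationaryDensity.

Variables (g : R -> R) (h : R).
Hypotheses (g_derivable : forall x : R, ex_derive g x) (g_periodic : periodic1 g) (h_pos : 0 < h).

Lemma drift_continuous x : continuous g x.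
Proof. apply continuous_of_ex_derive, g_derivable. Qed.

Definition prim x := RInt g 0 x.
Definition weight y := exp (prim y / h).
Definition rho x := exp (- prim x / h) * RInt weight (x - 1) x.

Lemma is_derive_prim x : is_derive prim x (g x).
Proof. apply is_derive_RInt_upper, drift_continuous. Qed.

Lemma prim_shift x : prim (x + 1) = prim x + prim 1.
Proof.
  assert (Hshift : RInt g 1 (x + 1) = RInt g 0 x).
  { replace 1 with (0 + 1) at 1 by ring.
    rewrite <- RInt_shift1 by apply drift_continuous.
    apply RInt_ext; intros; apply g_periodic. }
  unfold prim; rewrite <- Hshift, <- (RInt_Chasles_minus g 0 1 (x + 1)) by apply drift_continuous.
  unfold Rminus; rewrite Rplus_assoc, Rplus_opp_l, Rplus_0_r; reflexivity.
Qed.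

Lemma prim_increment_bounds m M x y :
  (forall x, m <= g x <= M) -> y <= x -> m * (x - y) <= prim x - prim y <= M * (x - y).
Proof.
  intros gb Hyx; unfold prim; rewrite RInt_Chasles_minus by apply drift_continuous.
  apply RInt_const_bounds; auto; apply drift_continuous.
Qed.

Lemma weight_continuous x : continuous weight x.
Proof.
  apply continuous_of_ex_derive; unfold weight; auto_derive.
  eexists; apply is_derive_prim.
Qed.

Lemma weight_shift y : weight (y - 1) = weight y * exp (- prim 1 / h).
Proof.
  unfold weight; rewrite <- exp_plus; f_equal.
  replace y with ((y - 1) + 1) at 2 by ring; rewrite prim_shift; field; lra.
Qed.

Lemma is_derive_rho x :
  is_derive rho x (- g x / h * rho x + (1 - exp (- prim 1 / h))).
Proof.
  assert (Hexp : is_derive (fun y => exp (- prim y / h)) x (- g x / h * exp (- prim x / h))).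
  { replace (- g x / h * exp (- prim x / h)) with (scal (g x) (- / h * exp (- prim x / h)))
      by (unfold scal; simpl; unfold mult; simpl; field; lra).
    apply (is_derive_comp (fun u => exp (- u / h)) prim); [auto_derive; [lra | unfold Rdiv; ring] |].
    apply is_derive_prim. }
  assert (Hwin : is_derive (fun y => RInt weight (y - 1) y) x (weight x - weight (x - 1))).
  { apply (is_derive_ext (fun y => RInt weight 0 y - RInt weight 0 (y - 1))).
    { intros y; apply RInt_Chasles_minus, weight_continuous. }
    apply (is_derive_minus (RInt weight 0) (fun y => RInt weight 0 (y - 1)));
      [apply is_derive_RInt_upper, weight_continuous |].
    replace (weight (x - 1)) with (scal 1 (weight (x - 1)))
      by (unfold scal; simpl; unfold mult; simpl; ring).
    apply (is_derive_comp (RInt weight 0) (fun y => y - 1));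
      [apply is_derive_RInt_upper, weight_continuous | auto_derive; auto; ring]. }
  replace (- g x / h * rho x + (1 - exp (- prim 1 / h)))
    with (plus (mult (- g x / h * exp (- prim x / h)) (RInt weight (x - 1) x))
               (mult (exp (- prim x / h)) (weight x - weight (x - 1)))).
  - apply (is_derive_mult (fun y => exp (- prim y / h)) (fun y => RInt weight (y - 1) y));
      auto; intros; unfold mult; simpl; ring.
  - unfold plus, mult, rho; simpl; rewrite weight_shift; unfold weight.
    replace (- prim x / h) with (- (prim x / h)) by (unfold Rdiv; ring).
    rewrite exp_Ropp; field; split; [apply Rgt_not_eq, exp_pos | lra].
Qed.

Lemma rho_periodic : periodic1 rho.
Proof.
  intros x; unfold rho.
  replace (x + 1 - 1) with (x - 1 + 1) by ring.
  rewrite <- RInt_shift1 by apply weight_continuous.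
  rewrite (RInt_ext (fun y => weight (y + 1)) (fun y => scal (exp (prim 1 / h)) (weight y))).
  2:{ intros y _; unfold weight, scal; simpl; unfold mult; simpl.
      rewrite prim_shift, <- exp_plus; f_equal; field; lra. }
  rewrite (RInt_scal (V := R_CompleteNormedModule)) by apply ex_RInt_of_continuous, weight_continuous.
  unfold scal; simpl; unfold mult; simpl.
  rewrite prim_shift, <- Rmult_assoc, <- exp_plus.
  replace (- (prim x + prim 1) / h + prim 1 / h) with (- prim x / h) by (field; lra); reflexivity.
Qed.

Lemma rho_kernel x : rho x = RInt (fun y => exp ((prim y - prim x) / h)) (x - 1) x.
Proof.
  unfold rho.
  rewrite <- (RInt_scal (V := R_CompleteNormedModule)) by apply ex_RInt_of_continuous, weight_continuous.
  apply RInt_ext; intros y _; unfold scal, weight; simpl; unfold mult; simpl.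
  rewrite <- exp_plus; f_equal; field; lra.
Qed.

Lemma Derive_rho x : Derive rho x = - g x / h * rho x + (1 - exp (- prim 1 / h)).
Proof. apply is_derive_unique, is_derive_rho. Qed.

Lemma rho_continuous x : continuous rho x.
Proof. apply continuous_of_ex_derive; eexists; apply is_derive_rho. Qed.

Lemma ex_derive_Derive_rho x : ex_derive (Derive rho) x.
Proof.
  apply (ex_derive_ext (fun y => - g y / h * rho y + (1 - exp (- prim 1 / h)))).
  { intros; symmetry; apply Derive_rho. }
  auto_derive; repeat split; auto; eexists; apply is_derive_rho.
Qed.

Lemma rho_stationary x : Derive (fun y => g y * rho y) x + h * Derive_n rho 2 x = 0.
Proof.
  assert (Hflux : forall y, g y * rho y = h * (1 - exp (- prim 1 / h)) - h * Derive rho y).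
  { intros y; rewrite Derive_rho; field; lra. }
  rewrite (Derive_ext _ _ x Hflux); change (Derive_n rho 2 x) with (Derive (Derive rho) x).
  rewrite Derive_minus, Derive_const, Derive_scal; [ring | apply ex_derive_const |].
  apply ex_derive_scal, ex_derive_Derive_rho.
Qed.

Lemma rho_bounds m M x :
  (forall x, m <= g x <= M) -> 0 < m -> h <= M -> h / (2 * M) <= rho x <= h / m.
Proof.
  intros g_bounds m_pos h_le_M.
  assert (M_pos : 0 < M) by lra.
  assert (Hcont : forall y, continuous (fun y => exp ((prim y - prim x) / h)) y).
  { intros y; apply continuous_of_ex_derive; auto_derive; eexists; apply is_derive_prim. }
  rewrite rho_kernel; split.
  - apply Rle_trans with (RInt (fun y => exp (- (M / h) * (x - y))) (x - 1) x).
    + rewrite RInt_exp_decay by (apply Rdiv_lt_0_compat; lra).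
      assert (exp (- (M / h)) <= exp (- (1))).
      { apply exp_le_exp, Ropp_le_contravar, Rle_div_r; lra. }
      pose proof exp_neg1_lt_half.
      replace ((1 - exp (- (M / h))) / (M / h)) with ((1 - exp (- (M / h))) * (h / M)) by (field; lra).
      replace (h / (2 * M)) with (/ 2 * (h / M)) by (field; lra).
      apply Rmult_le_compat_r; [apply Rlt_le, Rdiv_lt_0_compat |]; lra.
    + apply RInt_le; [lra | apply ex_RInt_of_continuous; intros y; apply continuous_of_ex_derive; auto_derive; auto
                     | apply ex_RInt_of_continuous, Hcont |].
      intros y Hy; apply exp_le_exp.
      destruct (prim_increment_bounds m M x y g_bounds) as [_ H]; [lra |].
      replace (- (M / h) * (x - y)) with (- (M * (x - y)) / h) by (field; lra).
      apply Rmult_le_compat_r; [apply Rlt_le, Rinv_0_lt_compat |]; lra.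
  - apply Rle_trans with (RInt (fun y => exp (- (m / h) * (x - y))) (x - 1) x).
    + apply RInt_le; [lra | apply ex_RInt_of_continuous, Hcont
                     | apply ex_RInt_of_continuous; intros y; apply continuous_of_ex_derive; auto_derive; auto |].
      intros y Hy; apply exp_le_exp.
      destruct (prim_increment_bounds m M x y g_bounds) as [H _]; [lra |].
      replace (- (m / h) * (x - y)) with (- (m * (x - y)) / h) by (field; lra).
      apply Rmult_le_compat_r; [apply Rlt_le, Rinv_0_lt_compat |]; lra.
    + rewrite RInt_exp_decay by (apply Rdiv_lt_0_compat; lra).
      pose proof (exp_pos (- (m / h))).
      replace ((1 - exp (- (m / h))) / (m / h)) with ((1 - exp (- (m / h))) * (h / m)) by (field; lra).
      replace (h / m) with (1 * (h / m)) at 2 by ring.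
      apply Rmult_le_compat_r; [apply Rlt_le, Rdiv_lt_0_compat |]; lra.
Qed.

End StationaryDensity.

Lemma stationary_density (g : R -> R) (m M h : R) :
  (forall x : R, ex_derive g x) -> periodic1 g -> (forall x, m <= g x <= M) ->
  0 < m -> 0 < h -> h <= M ->
  exists sigma : R -> R,
    periodic1 sigma /\ (forall x, 0 <= sigma x) /\ RInt sigma (-(1/2)) (1/2) = 1 /\
    (forall x, ex_derive sigma x /\ ex_derive (Derive sigma) x) /\
    (forall x, Derive (fun y => g y * sigma y) x + h * Derive_n sigma 2 x = 0) /\
    (forall x, m / (2 * M) <= sigma x <= 2 * M / m).
Proof.
  intros gd gp gb mpos hpos hM.
  assert (Mpos : 0 < M) by lra.
  pose proof (fun x => rho_bounds g h gd hpos m M x gb mpos hM) as rb.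
  pose proof (rho_continuous g h gd gp hpos) as rc.
  set (Z := RInt (rho g h) (-(1/2)) (1/2)).
  assert (ZB : h / (2 * M) <= Z <= h / m).
  { pose proof (RInt_const_bounds (rho g h) (-(1/2)) (1/2) _ _ rc ltac:(lra) rb).
    replace (1/2 - - (1/2)) with 1 in * by field; unfold Z; lra. }
  assert (lo_pos : 0 < h / (2 * M)) by (apply Rdiv_lt_0_compat; lra).
  assert (Zpos : 0 < Z) by lra.
  assert (Hd : forall x, ex_derive (rho g h) x) by (intros; eexists; apply is_derive_rho; auto).
  exists (fun x => / Z * rho g h x); repeat split.
  - intros x; rewrite rho_periodic; auto.
  - intros x; pose proof (rb x); apply Rmult_le_pos; [apply Rlt_le, Rinv_0_lt_compat |]; lra.
  - rewrite (RInt_scal (V := R_CompleteNormedModule) (rho g h)) by apply ex_RInt_of_continuous, rc.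
    unfold scal; simpl; unfold mult; simpl; fold Z; field; lra.
  - apply ex_derive_scal, Hd.
  - apply (ex_derive_ext (fun y => / Z * Derive (rho g h) y));
      [intros; symmetry; apply Derive_scal | apply ex_derive_scal, ex_derive_Derive_rho; auto].
  - intros x.
    rewrite (Derive_ext _ (fun y => / Z * (g y * rho g h y))) by (intros; ring).
    rewrite Derive_scal, Derive_n_scal_l, <- (Rmult_0_r (/ Z)), <- (rho_stationary g h gd gp hpos x); ring.
  - replace (m / (2 * M)) with (/ (h / m) * (h / (2 * M))) by (field; lra).
    pose proof (rb x); apply Rmult_le_compat;
      [apply Rlt_le, Rinv_0_lt_compat | | apply Rinv_le_contravar |]; lra.
  - replace (2 * M / m) with (/ (h / (2 * M)) * (h / m)) by (field; lra).
    pose proof (rb x); apply Rmult_le_compat;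
      [apply Rlt_le, Rinv_0_lt_compat | | apply Rinv_le_contravar |]; lra.
Qed.

Lemma ex_derive_sumR_pow (D : nat -> R -> R) h n x :
  (forall j x, ex_derive (D j) x) -> ex_derive (fun y => sumR (fun j => h ^ j * D j y) n) x.
Proof.
  intros Dd; induction n as [|n IH]; simpl; [apply ex_derive_const |].
  apply (ex_derive_plus (fun y => sumR (fun j => h ^ j * D j y) n) (fun y => h ^ n * D n y));
    [exact IH | apply ex_derive_scal, Dd].
Qed.

Lemma periodic1_sumR_pow (D : nat -> R -> R) h n :
  (forall j, periodic1 (D j)) -> periodic1 (fun y => sumR (fun j => h ^ j * D j y) n).
Proof.
  intros Dp x; induction n as [|n IH]; simpl; [reflexivity |].
  rewrite IH, Dp; reflexivity.
Qed.

Lemma sumR_pow_remainder (D : nat -> R -> R) n :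
  (forall j, (1 <= j)%nat -> exists B, forall x, Rabs (D j x) <= B) ->
  exists B, 0 <= B /\ forall h x, 0 <= h <= 1 ->
    Rabs (sumR (fun j => h ^ j * D j x) (S n) - D O x) <= h * B.
Proof.
  intros HD; induction n as [|n [B [B0 IH]]].
  - exists 0; split; [lra |]; intros h x Hh; simpl.
    replace (0 + 1 * D O x - D O x) with 0 by ring; rewrite Rabs_R0; lra.
  - destruct (HD (S n)) as [B' HB']; [lia |].
    pose proof (Rabs_pos (D (S n) 0)); pose proof (HB' 0).
    exists (B + B'); split; [lra |]; intros h x Hh.
    change (sumR (fun j => h ^ j * D j x) (S (S n)))
      with (sumR (fun j => h ^ j * D j x) (S n) + h * h ^ n * D (S n) x).
    replace (_ + h * h ^ n * D (S n) x - D O x)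
      with ((sumR (fun j => h ^ j * D j x) (S n) - D O x) + h * (h ^ n * D (S n) x)) by ring.
    eapply Rle_trans; [apply Rabs_triang |]; rewrite Rmult_plus_distr_l.
    apply Rplus_le_compat; [apply IH, Hh |].
    rewrite !Rabs_mult, (Rabs_pos_eq h), (Rabs_pos_eq (h ^ n)) by (try apply pow_le; lra).
    apply Rmult_le_compat_l; [lra |].
    pose proof (pow_incr h 1 n Hh) as Hpow; rewrite pow1 in Hpow; pose proof (pow_le h n (proj1 Hh));
      pose proof (Rabs_pos (D (S n) x)); pose proof (HB' x); nra.
Qed.

Section Expansion.

Variables (V : R -> R) (P c : R) (v : nat -> R -> R).
Hypotheses (V_derivable : forall x : R, ex_derive V x) (V_periodic : periodic1 V)
  (V_lt_c : forall x, V x < c) (v_family : expansion_family V P c v).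

Lemma pplus_ex_derive x : ex_derive (pplus V c) x.
Proof. unfold pplus; auto_derive; split; [auto | specialize (V_lt_c x); lra]. Qed.

Lemma pplus_bounds : exists m M, 0 < m /\ forall x, m <= pplus V c x <= M.
Proof.
  destruct (periodic1_max V V_periodic) as [xM HxM].
  { intros; apply continuous_of_ex_derive, V_derivable. }
  destruct (periodic1_bounded (pplus V c)) as [M [_ HM]].
  { intros x; unfold pplus; rewrite V_periodic; reflexivity. }
  { intros; apply continuous_of_ex_derive, pplus_ex_derive. }
  exists (pplus V c xM), M; split.
  - unfold pplus; apply sqrt_lt_R0; specialize (V_lt_c xM); lra.
  - intros x; split; [unfold pplus; apply sqrt_le_1_alt; specialize (HxM x); lra |].
    eapply Rle_trans; [apply Rle_abs | apply HM].
Qed.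

Lemma Derive_v0 x : Derive (v O) x = pplus V c x - P.
Proof.
  destruct v_family as [-> _]; apply is_derive_unique; unfold v0.
  apply (is_derive_minus (RInt (pplus V c) (-(1/2))) (fun y => P * (y + 1/2))).
  - apply is_derive_RInt_upper; intros; apply continuous_of_ex_derive, pplus_ex_derive.
  - auto_derive; auto; ring.
Qed.

Lemma Derive_v_ex_derive j x : ex_derive (Derive (v j)) x.
Proof.
  destruct j as [|j].
  - apply (ex_derive_ext (fun y => pplus V c y - P)); [intros; symmetry; apply Derive_v0 |].
    apply (ex_derive_minus (pplus V c) (fun _ => P)); [apply pplus_ex_derive | apply ex_derive_const].
  - destruct v_family as [_ Hv]; destruct (Hv (S j)) as [Hs _]; [lia | exact (Hs 2%nat x)].
Qed.

Lemma Derive_v_periodic j : periodic1 (Derive (v j)).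
Proof.
  destruct j as [|j].
  - intros x; rewrite !Derive_v0; unfold pplus; rewrite V_periodic; reflexivity.
  - destruct v_family as [_ Hv]; destruct (Hv (S j)) as [Hs [Hp _]]; [lia |].
    apply periodic1_Derive; [exact Hp | intros y; exact (Hs 1%nat y)].
Qed.

Lemma gN_ex_derive N h x : ex_derive (gN P v N h) x.
Proof.
  apply (ex_derive_plus (fun _ => P) (fun y => sumR (fun j => h ^ j * Derive (v j) y) (S N)));
    [apply ex_derive_const | apply ex_derive_sumR_pow, Derive_v_ex_derive].
Qed.

Lemma gN_periodic N h : periodic1 (gN P v N h).
Proof.
  intros x; unfold gN; f_equal.
  apply (periodic1_sumR_pow (fun j => Derive (v j))), Derive_v_periodic.
Qed.

Lemma gN_near_pplus N :
  exists B, 0 <= B /\ forall h x, 0 <= h <= 1 -> Rabs (gN P v N h x - pplus V c x) <= h * B.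
Proof.
  destruct (sumR_pow_remainder (fun j => Derive (v j)) N) as [B [B0 HB]].
  { intros j _; destruct (periodic1_bounded (Derive (v j))) as [B [_ HB]];
      [apply Derive_v_periodic | intros; apply continuous_of_ex_derive, Derive_v_ex_derive |].
    exists B; exact HB. }
  exists B; split; [exact B0 |]; intros h x Hh.
  specialize (HB h x Hh); rewrite Derive_v0 in HB; unfold gN.
  replace (P + _ - pplus V c x) with (sumR (fun j => h ^ j * Derive (v j) x) (S N) - (pplus V c x - P))
    by ring; exact HB.
Qed.

End Expansion.

Theorem mainTheorem4 (V : R -> R) (P c : R) (v : nat -> R -> R) (N : nat) :
  admissible_potential V ->
  is_Hbar V P c ->
  0 < P ->
  (forall x, V x < c) ->
  expansion_family V P c v ->
  exists h0 k K : R, 0 < h0 /\ 0 < k /\ 0 < K /\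
    forall h : R, 0 < h < h0 ->
      exists sigma : R -> R,
        periodic1 sigma /\
        (forall x, 0 <= sigma x) /\
        RInt sigma (-(1/2)) (1/2) = 1 /\
        (forall x, ex_derive sigma x /\ ex_derive (Derive sigma) x) /\
        (forall x, Derive (fun y => gN P v N h y * sigma y) x
                   + h * Derive_n sigma 2 x = 0) /\
        (forall x, k <= sigma x <= K).
Proof.
  intros [V_smooth [V_periodic _]] _ _ V_lt_c v_family.
  assert (V_derivable : forall x : R, ex_derive V x) by (intros x; exact (V_smooth 1%nat x)).
  destruct (pplus_bounds V c V_derivable V_periodic V_lt_c) as [m0 [M0 [m0_pos pplus_mM]]].
  destruct (gN_near_pplus V P c v V_derivable V_periodic V_lt_c v_family N) as [B [B_nonneg HB]].
  pose proof (pplus_mM 0).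
  set (m := m0 / 2); set (M := M0 + m0 / 2).
  assert (m_pos : 0 < m) by (unfold m; lra); assert (M_pos : 0 < M) by (unfold M; lra).
  exists (Rmin 1 (m0 / (2 * (B + 1)))), (m / (2 * M)), (2 * M / m).
  split; [apply Rmin_glb_lt; [lra | apply Rdiv_lt_0_compat; lra] |].
  split; [apply Rdiv_lt_0_compat; lra |]; split; [apply Rdiv_lt_0_compat; lra |].
  intros h [h_pos h_lt].
  assert (h_le_1 : h <= 1) by (pose proof (Rmin_l 1 (m0 / (2 * (B + 1)))); lra).
  assert (h_small : h * (B + 1) <= m0 / 2).
  { pose proof (Rmin_r 1 (m0 / (2 * (B + 1)))).
    apply Rle_trans with (m0 / (2 * (B + 1)) * (B + 1)); [apply Rmult_le_compat_r; lra |].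
    right; field; lra. }
  apply (stationary_density (gN P v N h) m M h);
    [apply (gN_ex_derive V P c); auto | apply (gN_periodic V P c); auto | | exact m_pos | exact h_pos | unfold M; nra].
  intros x; pose proof (pplus_mM x).
  destruct (proj1 (Rabs_le_between _ _) (HB h x (conj (Rlt_le _ _ h_pos) h_le_1))).
  unfold m, M; nra.
Qed.
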